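(* The class $c_r$ of relative convex sequences is not closed under addition: for instance the sequences $(\sqrt{|n-3|})_{n\ge1}$ and $(\sqrt{|n-9|})_{n\ge1}$ both belong to $c_r$, but their sum $(\sqrt{|n-3|}+\sqrt{|n-9|})_{n\ge1}$ does not.
   Context: For a real sequence $(x_i)$, $\Delta x_i=x_{i+1}-x_i$. A real sequence $a=(a_i)_{i\ge1}$ is relative convex if there exists a strictly increasing real sequence $(t_i)_{i\ge1}$ such that $(\Delta a_i/\Delta t_i)_{i\ge1}$ is non-decreasing; $c_r$ denotes the class of all relative convex sequences. *)

From Stdlib Require Import Reals Lra Lia.
Open Scope R_scope.

(* Sequences are functions nat -> R; only indices i >= 1 are relevant
   (the value at index 0 is ignored). *)
Definition seqR := nat -> R.

Definition Delta (x : seqR) (i : nat) : R := x (S i) - x i.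

Definition relative_convex (a : seqR) : Prop :=
  exists t : seqR,
    (forall i : nat, (1 <= i)%nat -> t i < t (S i)) /\
    (forall i : nat, (1 <= i)%nat ->
       Delta a i / Delta t i <= Delta a (S i) / Delta t (S i)).

Definition c_r : seqR -> Prop := relative_convex.

Definition seq_add (a b : seqR) : seqR := fun n => a n + b n.

(* If t is strictly increasing, the ratio Delta a_i / Delta t_i has the sign of
   Delta a_i.  Two consequences drive the proof:
   - membership: a sequence that strictly decreases up to an index N and
     strictly increases afterwards is relative convex, taking Delta t_i :=
     Delta a_i / (i - N + 1/2), which makes the ratio sequence equal to the
     increasing sequence i - N + 1/2 (it is positive since both factors
     change sign at N);
   - obstruction: in a relative convex sequence the ratios are non-decreasing,
     so once some Delta a_i (i >= 1) is positive, no later Delta a_j is negative.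
   The sequences sqrt|n - c| for a natural number c are of the first kind, so
   they lie in c_r; their sum for c = 3, 9 increases at step 3 (by 1 + sqrt 5 -
   sqrt 6) and decreases at step 8 (by the same amount), hence is not in c_r. *)
From Pilot Require Import Defs.
From Stdlib Require Import Reals Lra Lia.
Open Scope R_scope.

Lemma c_r_of_valley (a : seqR) (N : nat) :
  (forall i, (i < N)%nat -> Defs.Delta a i < 0) ->
  (forall i, (N <= i)%nat -> 0 < Defs.Delta a i) -> c_r a.
Proof.
  intros Hdec Hinc.
  set (s := fun i : nat => INR i - INR N + /2).
  assert (Hsign : forall i, 0 < Defs.Delta a i / s i).
  { intros i; unfold s; destruct (Nat.lt_ge_cases i N) as [H|H];
      apply le_INR in H; [rewrite S_INR in H|].
    - assert (Hi : Defs.Delta a i < 0) by (apply Hdec; apply INR_lt; lra).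
      unfold Rdiv; apply Rmult_neg_neg; [lra | apply Rinv_lt_0_compat; lra].
    - assert (Hi : 0 < Defs.Delta a i) by (apply Hinc, INR_le; lra).
      apply Rdiv_lt_0_compat; lra. }
  set (t := fix t (n : nat) : R :=
              match n with O => 0 | S m => t m + Defs.Delta a m / s m end).
  assert (Ht : forall i, Defs.Delta t i = Defs.Delta a i / s i).
  { intros i; unfold Defs.Delta at 1; simpl; ring. }
  assert (Hratio : forall i, Defs.Delta a i / Defs.Delta t i = s i).
  { intros i; rewrite Ht.
    assert (Ha : Defs.Delta a i <> 0).
    { intro H0; specialize (Hsign i); rewrite H0 in Hsign; unfold Rdiv in Hsign; lra. }
    assert (Hs : s i <> 0).
    { intro H0; specialize (Hsign i); rewrite H0, Rdiv_0_r in Hsign; lra. }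
    field; auto. }
  exists t; split; intros i _.
  - specialize (Hsign i); rewrite <- Ht in Hsign; unfold Defs.Delta in Hsign; lra.
  - rewrite !Hratio; unfold s; rewrite S_INR; lra.
Qed.

Lemma c_r_no_decrease_after_increase (a : seqR) (i j : nat) :
  c_r a -> (1 <= i <= j)%nat -> 0 < Defs.Delta a i -> ~ Defs.Delta a j < 0.
Proof.
  intros [t [Ht Hmon]] Hij Hai Haj.
  assert (Hchain : forall k,
            Defs.Delta a i / Defs.Delta t i <= Defs.Delta a (i + k) / Defs.Delta t (i + k)).
  { induction k as [|k IH]; [rewrite Nat.add_0_r; lra|].
    rewrite Nat.add_succ_r; eapply Rle_trans; [apply IH | apply Hmon; lia]. }
  assert (Hti : 0 < Defs.Delta t i) by (unfold Defs.Delta; apply Rlt_0_minus, Ht; lia).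
  assert (Htj : 0 < Defs.Delta t j) by (unfold Defs.Delta; apply Rlt_0_minus, Ht; lia).
  assert (Hpos : 0 < Defs.Delta a i / Defs.Delta t i) by (apply Rdiv_lt_0_compat; lra).
  assert (Hneg : Defs.Delta a j / Defs.Delta t j < 0).
  { unfold Rdiv; apply Rmult_neg_pos; [lra | apply Rinv_0_lt_compat; lra]. }
  specialize (Hchain (j - i)%nat); replace (i + (j - i))%nat with j in Hchain by lia.
  lra.
Qed.

Lemma c_r_sqrt_dist (N : nat) : c_r (fun n : nat => sqrt (Rabs (INR n - INR N))).
Proof.
  apply (c_r_of_valley _ N); intros i Hi; unfold Defs.Delta;
    apply le_INR in Hi; rewrite S_INR in *.
  - rewrite !Rabs_left1 by lra.
    assert (sqrt (- (INR i + 1 - INR N)) < sqrt (- (INR i - INR N)))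
      by (apply sqrt_lt_1_alt; lra).
    lra.
  - rewrite !Rabs_right by lra.
    assert (sqrt (INR i - INR N) < sqrt (INR i + 1 - INR N))
      by (apply sqrt_lt_1_alt; lra).
    lra.
Qed.

Lemma sqrt_abs_eval (x c d : R) :
  0 <= d -> x - c = d \/ x - c = - d -> sqrt (Rabs (x - c)) = sqrt d.
Proof.
  intros Hd [H|H]; rewrite H; [rewrite Rabs_right | rewrite Rabs_Ropp, Rabs_right];
    auto; lra.
Qed.

Lemma sqrt6_lt_1_plus_sqrt5 : sqrt 6 < 1 + sqrt 5.
Proof.
  assert (sqrt 6 < 5/2).
  { rewrite <- (sqrt_square (5/2)) by lra. apply sqrt_lt_1_alt; lra. }
  assert (2 < sqrt 5).
  { rewrite <- (sqrt_square 2) by lra. apply sqrt_lt_1_alt; lra. }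
  lra.
Qed.

Section SumExample.

Let u (n : nat) : R := sqrt (Rabs (INR n - 3)).
Let v (n : nat) : R := sqrt (Rabs (INR n - 9)).

Lemma sum_increases_at_3 : 0 < Defs.Delta (seq_add u v) 3.
Proof.
  unfold Defs.Delta, seq_add, u, v.
  rewrite (sqrt_abs_eval (INR 4) 3 1), (sqrt_abs_eval (INR 3) 3 0),
    (sqrt_abs_eval (INR 4) 9 5), (sqrt_abs_eval (INR 3) 9 6) by (simpl; lra).
  rewrite sqrt_1, sqrt_0; pose proof sqrt6_lt_1_plus_sqrt5; lra.
Qed.

Lemma sum_decreases_at_8 : Defs.Delta (seq_add u v) 8 < 0.
Proof.
  unfold Defs.Delta, seq_add, u, v.
  rewrite (sqrt_abs_eval (INR 9) 3 6), (sqrt_abs_eval (INR 8) 3 5),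
    (sqrt_abs_eval (INR 9) 9 0), (sqrt_abs_eval (INR 8) 9 1) by (simpl; lra).
  rewrite sqrt_1, sqrt_0; pose proof sqrt6_lt_1_plus_sqrt5; lra.
Qed.

Lemma sum_not_c_r : ~ c_r (seq_add u v).
Proof.
  intro Hc.
  exact (c_r_no_decrease_after_increase _ 3 8 Hc ltac:(lia)
           sum_increases_at_3 sum_decreases_at_8).
Qed.

End SumExample.

Theorem corollary2p4 :
  (~ (forall a b : seqR, c_r a -> c_r b -> c_r (seq_add a b))) /\
  c_r (fun n : nat => sqrt (Rabs (INR n - 3))) /\
  c_r (fun n : nat => sqrt (Rabs (INR n - 9))) /\
  ~ c_r (seq_add (fun n : nat => sqrt (Rabs (INR n - 3)))
                 (fun n : nat => sqrt (Rabs (INR n - 9)))).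
Proof.
  assert (H3 : c_r (fun n : nat => sqrt (Rabs (INR n - 3)))).
  { replace 3 with (INR 3) by (simpl; lra). apply c_r_sqrt_dist. }
  assert (H9 : c_r (fun n : nat => sqrt (Rabs (INR n - 9)))).
  { replace 9 with (INR 9) by (simpl; lra). apply c_r_sqrt_dist. }
  split; [| split; [exact H3 | split; [exact H9 | exact sum_not_c_r]]].
  intro Hclosed. exact (sum_not_c_r (Hclosed _ _ H3 H9)).
Qed.
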